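(* Let a liquidity provider have a concave, increasing utility $U_P$ over terminal wealth, initial reserves $x_0$ of numeraire and $y_0$ of a yield token which pays a random amount $Y$ at maturity (expectations taken under her belief distribution for $Y$). Define $$p^S(\Delta)=\sup\{p\ge 0:\ \mathbb{E}[U_P(x_0+y_0Y)]\le \mathbb{E}[U_P(x_0+y_0Y+\Delta(Y-p))]\},$$ $$p^B(\Delta)=\inf\{p\ge 0:\ \mathbb{E}[U_P(x_0+y_0Y)]\le \mathbb{E}[U_P(x_0+y_0Y+\Delta(p-Y))]\},$$ $$\psi_S(x_0,y_0)=\{(x,y):\ y=y_0+\Delta,\ x=x_0-\Delta p^S(\Delta),\ \Delta\ge 0\},$$ $$\psi_B(x_0,y_0)=\{(x,y):\ y=y_0-\Delta,\ x=x_0+\Delta p^B(\Delta),\ \Delta\ge 0\}.$$ Then the curve $\psi(x_0,y_0,U_P,Y)=\psi_S\cup\psi_B$ is the optimally efficient bonding curve for the liquidity provider: for every point $(x,y)\in\psi$, $\mathbb{E}[U_P(x+yY)]=\mathbb{E}[U_P(x_0+y_0Y)]$.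
   Context: A bonding curve constrains the reserves $(x,y)$ of an automated market maker (numeraire and yield token) reachable by trades. It is called optimally efficient for the liquidity provider if the liquidity provider's expected utility of terminal wealth $x+yY$ does not change when a trader moves the reserves along the curve. *)

From HB Require Import structures.
From mathcomp Require Import all_boot all_order all_algebra.
From mathcomp Require Import all_classical all_reals all_analysis.
Set Implicit Arguments. Unset Strict Implicit. Unset Printing Implicit Defensive.
Import Order.TTheory GRing.Theory Num.Theory.
Local Open Scope classical_set_scope.
Local Open Scope ring_scope.

Section AMM.
Context {R : realType} {d : measure_display} {T : measurableType d}.
Variable (P : probability T R).

Definition concave_fun (U : R -> R) : Prop :=
  forall x y t : R, 0 <= t <= 1 ->
    t * U x + (1 - t) * U y <= U (t * x + (1 - t) * y).

Definition EU (U : R -> R) (Y : T -> R) (x y : R) : \bar R :=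
  'E_P[fun w => U (x + y * Y w)].

Definition pS (U : R -> R) (Y : T -> R) (x0 y0 D : R) : R :=
  sup [set p : R | 0 <= p /\
        (EU U Y x0 y0 <= 'E_P[fun w => U (x0 + y0 * Y w + D * (Y w - p))%R])%E].

Definition pB (U : R -> R) (Y : T -> R) (x0 y0 D : R) : R :=
  inf [set p : R | 0 <= p /\
        (EU U Y x0 y0 <= 'E_P[fun w => U (x0 + y0 * Y w + D * (p - Y w))%R])%E].

Definition psiS (U : R -> R) (Y : T -> R) (x0 y0 : R) : set (R * R) :=
  [set xy | exists D : R, 0 <= D /\ xy = (x0 - D * pS U Y x0 y0 D, y0 + D)].

Definition psiB (U : R -> R) (Y : T -> R) (x0 y0 : R) : set (R * R) :=
  [set xy | exists D : R, 0 <= D /\ xy = (x0 + D * pB U Y x0 y0 D, y0 - D)].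

Definition psi (U : R -> R) (Y : T -> R) (x0 y0 : R) : set (R * R) :=
  psiS U Y x0 y0 `|` psiB U Y x0 y0.

End AMM.

(* Write G(x, y) = E[U(x + y Y)].  For a trade of size D > 0 the maps
   p |-> G(x0 - D p, y0 + D) and p |-> G(x0 + D p, y0 - D) are concave, hence
   continuous, in the price p.  The supremum of a bounded nonempty set
   {p >= 0 | G(x0, y0) <= phi p} of a continuous phi lies on the level
   G(x0, y0), and so does its infimum when phi 0 <= G(x0, y0).  For a sale,
   p = 0 is in the set because Y >= 0, and the set is bounded because a
   concave, strictly decreasing phi decreases at least linearly.  For a
   purchase, p = 0 leaves the provider worse off, while by monotone
   convergence a large enough price leaves her better off. *)

From HB Require Import structures.
From mathcomp Require Import all_boot all_order all_algebra.
From mathcomp Require Import all_classical all_reals all_analysis.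
From mathcomp Require Import ring lra measurable_realfun.
Import Order.TTheory GRing.Theory Num.Theory numFieldNormedType.Exports.
Local Open Scope classical_set_scope.
Local Open Scope ring_scope.

Section ConcaveFunctions.
Context {R : realType}.
Implicit Types (phi : R -> R) (a b c x t : R).

Lemma concave_comp_affine phi a b : concave_fun phi ->
  concave_fun (fun p => phi (a + b * p)).
Proof.
move=> cphi p q t t01 /=.
have -> : a + b * (t * p + (1 - t) * q)
  = t * (a + b * p) + (1 - t) * (a + b * q) by ring.
exact: cphi.
Qed.

Lemma concave_increment_bounds phi x t : concave_fun phi -> 0 <= t <= 1 ->
  t * (phi (x + 1) - phi x) <= phi (x + t) - phi x <= t * (phi x - phi (x - 1)).
Proof.
move=> cphi t01; have /andP[t0 t1] := t01; apply/andP; split.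
  have := cphi (x + 1) x t t01.
  by rewrite (_ : t * (x + 1) + (1 - t) * x = x + t); [lra | ring].
have t1_gt0 : 0 < 1 + t by lra.
have s01 : 0 <= (1 + t)^-1 <= 1 by rewrite invr_ge0 ltW //= invf_le1 //; lra.
have := cphi (x + t) (x - 1) _ s01.
rewrite (_ : _ * (x + t) + _ * (x - 1) = x); last by field; rewrite gt_eqF.
rewrite (_ : _ * phi (x + t) + _ = (phi (x + t) + t * phi (x - 1)) / (1 + t));
  last by field; rewrite gt_eqF.
by rewrite ler_pdivrMr //; lra.
Qed.

Lemma concave_increment_le phi x t : concave_fun phi -> `|t| <= 1 ->
  `|phi (x + t) - phi x|
    <= `|t| * (`|phi (x + 1) - phi x| + `|phi x - phi (x - 1)|).
Proof.
wlog t0 : phi x t / 0 <= t => [wlog cphi t1|cphi t1].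
  have [/wlog/(_ cphi t1)//|t_lt0] := leP 0 t.
  have := wlog (fun z => phi (0 + -1 * z)) (- x) (- t).
  rewrite oppr_ge0 normrN !mulN1r !add0r !opprD !opprK => /(_ (ltW t_lt0)).
  rewrite (distrC (phi (x - 1))) (distrC (phi x) (phi (x + 1))).
  rewrite (addrC `|phi x - phi (x - 1)|).
  by apply=> //; exact: concave_comp_affine.
have /andP[] := concave_increment_bounds phi x t cphi
  (introT andP (conj t0 (le_trans (ler_norm t) t1))).
set a := phi (x + 1) - phi x; set b := phi x - phi (x - 1) => lo hi.
have /andP[a_lo _] : - `|a| <= a <= `|a| by rewrite -ler_norml.
have /andP[_ b_hi] : - `|b| <= b <= `|b| by rewrite -ler_norml.
have := mulr_ge0 t0 (normr_ge0 a); have := mulr_ge0 t0 (normr_ge0 b).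
have := ler_wpM2l t0 a_lo; have := ler_wpM2l t0 b_hi; move=> *.
rewrite (ger0_norm t0) ler_norml; apply/andP; split; nra.
Qed.

Lemma concave_continuous phi : concave_fun phi -> continuous phi.
Proof.
move=> cphi x; apply/cvgrPdist_lt => e e0; apply/nbhs_ballP.
set C := `|phi (x + 1) - phi x| + `|phi x - phi (x - 1)|.
have C1_gt0 : 0 < C + 1 by rewrite ltr_pwDr ?addr_ge0.
exists (Num.min 1 (e / (C + 1))); first by rewrite /= lt_min ltr01 divr_gt0.
move=> q; rewrite /ball /= lt_min distrC => /andP[q1 qe].
have := concave_increment_le phi x (q - x) cphi (ltW q1).
rewrite subrKC -/C distrC.
move=> /le_lt_trans; apply.
rewrite -(ltr_pM2r C1_gt0) in qe; rewrite divfK ?gt_eqF // in qe.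
by apply: le_lt_trans qe; rewrite ler_wpM2l // lerDl.
Qed.

Lemma concave_le_secant phi t : concave_fun phi -> 1 <= t ->
  phi t <= phi 0 + t * (phi 1 - phi 0).
Proof.
move=> cphi t1; have t0 : 0 < t by lra.
have s01 : 0 <= t^-1 <= 1 by rewrite invr_ge0 ltW //= invf_le1.
have := cphi t 0 t^-1 s01.
rewrite (_ : t^-1 * t + _ = 1); last by field; rewrite gt_eqF.
rewrite (_ : t^-1 * phi t + _ = (phi t + (t - 1) * phi 0) / t);
  last by field; rewrite gt_eqF.
by rewrite ler_pdivrMr //; lra.
Qed.

Lemma concave_superlevel_has_ubound phi c : concave_fun phi -> phi 1 < phi 0 ->
  has_ubound [set p | c <= phi p].
Proof.
move=> cphi drop; set del := phi 0 - phi 1.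
have del0 : 0 < del by rewrite subr_gt0.
exists (Num.max 1 ((phi 0 - c) / del)) => p /= cp.
rewrite le_max; have [//|/ltW p_ge1] := leP p 1.
have := concave_le_secant phi p cphi p_ge1.
by rewrite /= ler_pdivlMr // /del; nra.
Qed.
End ConcaveFunctions.

Section NonnegSuperlevel.
Context {R : realType}.
Implicit Types (phi : R -> R) (c : R).

Definition nonneg_superlevel phi c := [set p : R | 0 <= p /\ c <= phi p].

Lemma continuous_ball {phi} s {e} : continuous phi -> 0 < e ->
  exists2 del, 0 < del & forall q, `|s - q| < del -> `|phi s - phi q| < e.
Proof.
move=> cphi e0.
have /cvgrPdist_lt/(_ e e0)/nbhs_ballP[del del0 near_s] := cphi s.
by exists del => // q sq; apply: near_s.
Qed.

Lemma continuous_sup_nonneg_superlevel phi c : continuous phi ->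
  has_sup (nonneg_superlevel phi c) -> phi (sup (nonneg_superlevel phi c)) = c.
Proof.
move=> cphi hs; set S := nonneg_superlevel phi c; set s := sup S.
have s_ub : ubound S s := sup_upper_bound hs.
have s0 : 0 <= s.
  by case: hs => -[p Sp] _; exact: le_trans (proj1 Sp) (s_ub _ Sp).
apply/eqP; rewrite eq_le !leNgt; apply/andP; split; apply/negP => lt_s.
- have [del del0 near_s] := continuous_ball s cphi (ltac:(lra) : 0 < phi s - c).
  have del2 : 0 < del / 2 by rewrite divr_gt0.
  have : S (s + del / 2).
    rewrite /S /nonneg_superlevel /=; split; first by lra.
    have /near_s : `|s - (s + del / 2)| < del.
      by rewrite opprD addNKr normrN gtr0_norm //; lra.
    by rewrite ltr_norml => /andP[_]; lra.
  by move=> /s_ub; lra.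
- have [del del0 near_s] := continuous_ball s cphi (ltac:(lra) : 0 < c - phi s).
  have [p [p0 cp] sp] : exists2 p, S p & s - del < p := sup_adherent del0 hs.
  have /near_s : `|s - p| < del by rewrite ger0_norm ?subr_ge0 ?s_ub //; lra.
  by rewrite ltr_norml => /andP[]; lra.
Qed.

Lemma continuous_inf_nonneg_superlevel phi c : continuous phi -> phi 0 <= c ->
  nonneg_superlevel phi c !=set0 -> phi (inf (nonneg_superlevel phi c)) = c.
Proof.
move=> cphi phi0 S_neq0; set S := nonneg_superlevel phi c; set i := inf S.
have S_lb0 : lbound S 0 by move=> p [].
have i_lb : lbound S i by apply: ge_inf; exists 0.
have i0 : 0 <= i := lb_le_inf S_neq0 S_lb0.
apply/eqP; rewrite eq_le !leNgt; apply/andP; split; apply/negP => lt_i.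
- have [del del0 near_i] := continuous_ball i cphi (ltac:(lra) : 0 < phi i - c).
  have i_gt0 : 0 < i.
    by rewrite lt_neqAle i0 andbT; apply: contraTneq lt_i => <-; lra.
  set m := Num.min (del / 2) i.
  have m0 : 0 < m by rewrite lt_min divr_gt0.
  have m_le : m <= del / 2 /\ m <= i by split; rewrite ge_min lexx ?orbT.
  have : S (i - m).
    rewrite /S /nonneg_superlevel /=; split; first by lra.
    have /near_i : `|i - (i - m)| < del by rewrite subKr gtr0_norm //; lra.
    by rewrite ltr_norml => /andP[_]; lra.
  by move=> /i_lb; lra.
- have [del del0 near_i] := continuous_ball i cphi (ltac:(lra) : 0 < c - phi i).
  have [p [p0 cp] pi] : exists2 p, S p & p < i + del.
    by apply: inf_adherent => //; split => //; exists 0.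
  have /near_i : `|i - p| < del.
    by rewrite distrC ger0_norm ?subr_ge0 ?i_lb //; lra.
  by rewrite ltr_norml => /andP[]; lra.
Qed.
End NonnegSuperlevel.

Section RealIntegrals.
Context {R : realType} {d : measure_display} {T : measurableType d}.
Variable mu : {measure set T -> \bar R}.

Lemma Rintegral_gt0 (f : T -> R) : (mu setT != 0)%E ->
  mu.-integrable setT (EFin \o f) -> (forall w, 0 < f w) -> 0 < \int[mu]_w f w.
Proof.
move=> mu_neq0 intf f_gt0; have [mf _] := integrableP _ _ _ intf.
rewrite lt_neqAle Rintegral_ge0 ?andbT; last by move=> w _; exact: ltW.
apply: contra mu_neq0 => /eqP int0.
have : (\int[mu]_(w in setT) `|(EFin \o f) w| = 0)%E.
  rewrite (eq_integral (EFin \o f)); last by move=> w _; rewrite /= gtr0_norm.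
  rewrite -(fineK (integrable_fin_num measurableT intf)).
  by rewrite -[fine _]/(\int[mu]_w f w) -int0.
move/(ae_eq_integral_abs mu measurableT mf) => [N [mN muN0 fN]].
rewrite -measure_le0 -muN0 le_measure ?inE // => w _.
by apply: fN => /(_ I) /= /eqP; rewrite eqe gt_eqF.
Qed.

Lemma Rintegral_gt_nondecreasing (h : nat -> T -> R) (g : T -> R) (c : R) :
  (forall n, mu.-integrable setT (EFin \o h n)) ->
  mu.-integrable setT (EFin \o g) ->
  (forall w, {homo h^~ w : m n / (m <= n)%N >-> m <= n}) ->
  (forall w, h 0%N w <= g w) -> (forall w, exists n, g w <= h n w) ->
  c < \int[mu]_w g w -> exists n, c < \int[mu]_w h n w.
Proof.
move=> int_h int_g h_nd h0_le_g g_le_h c_lt.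
have mh n : measurable_fun setT (h n).
  by have /integrableP[/measurable_EFinP] := int_h n.
have mg : measurable_fun setT g.
  by have /integrableP[/measurable_EFinP] := int_g.
pose k n w := (Num.min (h n w) (g w) - h 0%N w)%:E.
have mk n : measurable_fun setT (k n).
  by apply/measurable_EFinP/measurable_funB => //; exact: measurable_minr.
have k_ge0 n w : (0 <= k n w)%E.
  by rewrite lee_fin subr_ge0 le_min h0_le_g andbT; exact: h_nd.
have k_nd w : {homo k^~ w : m n / (m <= n)%N >-> (m <= n)%E}.
  by move=> m n mn; rewrite lee_fin lerD2r le_min2 ?h_nd.
have k_lim w : limn (k^~ w) = (g w - h 0%N w)%:E.
  apply: lim_near_cst => //; have [N gN] := g_le_h w.
  exists N => // n /= Nn; congr (_ - _)%:E.
  by apply: min_r; apply: le_trans gN (h_nd _ _ _ Nn).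
have := monotone_convergence mu measurableT mk (fun n w _ => k_ge0 n w)
  (fun w _ => k_nd w).
rewrite (eq_integral (EFin \o (fun w => g w - h 0%N w))); last first.
  by move=> w _; rewrite k_lim.
rewrite -[X in X = _]fineK ?(integrable_fin_num measurableT) //; last first.
  by apply: eq_integrable (integrableB measurableT int_g (int_h 0%N)).
rewrite -[fine _]/(\int[mu]_w (g w - h 0%N w)) RintegralB //.
rewrite (cvg_lim _ (ereal_nondecreasing_cvgn _)) //; last first.
  by move=> m n mn; apply: ge0_le_integral => // w _; exact: k_nd.
move=> sup_eq.
have : ((c - \int[mu]_w h 0%N w)%:E
    < ereal_sup (range (fun n => \int[mu]_(w in setT) k n w)))%E.
  by rewrite -sup_eq lte_fin ltrD2r.
case/ereal_sup_gt => _ [n _ <-] lt_kn; exists n.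
suff : (\int[mu]_(w in setT) k n w
    <= (\int[mu]_w h n w - \int[mu]_w h 0%N w)%:E)%E.
  by move/(lt_le_trans lt_kn); rewrite lte_fin ltrD2r.
rewrite -RintegralB // /Rintegral fineK; last first.
  apply: (integrable_fin_num measurableT).
  exact: eq_integrable (integrableB measurableT (int_h n) (int_h 0%N)).
apply: ge0_le_integral => //; first exact/measurable_EFinP/measurable_funB.
by move=> w _; rewrite lee_fin lerD2r ge_min lexx.
Qed.
End RealIntegrals.

Section ExpectedUtility.
Context {R : realType} {d : measure_display} {T : measurableType d}.
Variables (P : probability T R) (U : R -> R) (Y : T -> R).
Hypothesis U_concave : concave_fun U.
Hypothesis U_increasing : {homo U : a b / a < b}.
Hypothesis Y_ge0 : forall w, 0 <= Y w.
Hypothesis U_integrable :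
  forall x y : R, P.-integrable setT (fun w => (U (x + y * Y w))%:E).

Definition EUr (x y : R) : R := \int[P]_w U (x + y * Y w).

Let int_U x y : P.-integrable setT (EFin \o (fun w => U (x + y * Y w))).
Proof. exact: U_integrable. Qed.

Lemma EU_EUr x y : EU P U Y x y = (EUr x y)%:E.
Proof.
rewrite /EU /EUr /Rintegral unlock fineK //.
exact: integrable_fin_num (U_integrable x y).
Qed.

Lemma EUr_le x y x' y' : (forall w, x + y * Y w <= x' + y' * Y w) ->
  EUr x y <= EUr x' y'.
Proof.
move=> le_w.
apply: (le_Rintegral measurableT (U_integrable _ _) (U_integrable _ _)).
by move=> w _; exact/(ltW_homo U_increasing).
Qed.

Lemma EUr_ltDl x y c : 0 < c -> EUr x y < EUr (x + c) y.
Proof.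
move=> c_gt0; rewrite -subr_gt0 /EUr.
rewrite -(RintegralB measurableT (U_integrable _ _) (U_integrable _ _)).
apply: Rintegral_gt0.
- by rewrite -[X in X != _]/(P setT) probability_setT oner_neq0.
- exact: eq_integrable
    (integrableB measurableT (U_integrable _ _) (U_integrable _ _)).
- by move=> w; rewrite subr_gt0; apply: U_increasing; lra.
Qed.

Lemma EUr_concave y : concave_fun (EUr ^~ y).
Proof.
move=> x x' t t01 /=.
have int_sU z s : P.-integrable setT (EFin \o (fun w => s * U (z + y * Y w))).
  exact: eq_integrable (integrableZl measurableT s (U_integrable z y)).
rewrite /EUr -!RintegralZl //; try exact: int_U.
rewrite -(RintegralD measurableT (int_sU x t) (int_sU x' (1 - t))).
apply: le_Rintegral => //.
- exact: eq_integrable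
    (integrableD measurableT (int_sU x t) (int_sU x' (1 - t))).
- move=> w _; have := U_concave (x + y * Y w) (x' + y * Y w) t t01.
  have -> // : t * (x + y * Y w) + (1 - t) * (x' + y * Y w)
    = t * x + (1 - t) * x' + y * Y w by ring.
Qed.

Lemma EUr_affine_continuous (a b y : R) :
  continuous (fun p => EUr (a + b * p) y).
Proof.
exact/concave_continuous/(concave_comp_affine (EUr ^~ y))/EUr_concave.
Qed.

Lemma pS_EUr x0 y0 D : pS P U Y x0 y0 D =
  sup (nonneg_superlevel (fun p => EUr (x0 - D * p) (y0 + D)) (EUr x0 y0)).
Proof.
have E p : ('E_P[fun w => U (x0 + y0 * Y w + D * (Y w - p))%R]
    = (EUr (x0 - D * p) (y0 + D))%:E)%E.
  by rewrite -EU_EUr /EU; congr expectation; apply/funext => w; congr U; ring.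
by rewrite /pS; congr sup; apply/funext => p /=; rewrite E EU_EUr lee_fin.
Qed.

Lemma pB_EUr x0 y0 D : pB P U Y x0 y0 D =
  inf (nonneg_superlevel (fun p => EUr (x0 + D * p) (y0 - D)) (EUr x0 y0)).
Proof.
have E p : ('E_P[fun w => U (x0 + y0 * Y w + D * (p - Y w))%R]
    = (EUr (x0 + D * p) (y0 - D))%:E)%E.
  by rewrite -EU_EUr /EU; congr expectation; apply/funext => w; congr U; ring.
by rewrite /pB; congr inf; apply/funext => p /=; rewrite E EU_EUr lee_fin.
Qed.

Lemma EUr_pS x0 y0 D : 0 <= D ->
  EUr (x0 - D * pS P U Y x0 y0 D) (y0 + D) = EUr x0 y0.
Proof.
rewrite le_eqVlt => /predU1P[<-|D_gt0]; first by rewrite !mul0r subr0 addr0.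
pose psi p := EUr (x0 + - D * p) (y0 + D).
rewrite pS_EUr (_ : (fun p => EUr (x0 - D * p) (y0 + D)) = psi); last first.
  by apply/funext => p; rewrite /psi mulNr.
rewrite -mulNr; apply: (continuous_sup_nonneg_superlevel psi).
  exact: EUr_affine_continuous.
split.
  exists 0; split => //; apply: EUr_le => w.
  by rewrite mulr0 addr0 mulrDl lerD2l lerDl mulr_ge0 // ltW.
apply: (@subset_has_ubound _ _ _ [set p | EUr x0 y0 <= psi p]) => [p []//|].
apply: concave_superlevel_has_ubound.
  exact/(concave_comp_affine (EUr ^~ (y0 + D)))/EUr_concave.
by rewrite /psi mulr1 mulr0 addr0 -{2}(subrK D x0) EUr_ltDl.
Qed.

Lemma nonneg_superlevel_pB_neq0 x0 y0 D : 0 < D ->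
  nonneg_superlevel (fun p => EUr (x0 + D * p) (y0 - D)) (EUr x0 y0) !=set0.
Proof.
move=> D_gt0.
have DY_ge0 w : 0 <= D * Y w by rewrite mulr_ge0 // ltW.
have U_le := ltW_homo U_increasing.
(* For [n >= Y w + 1] the integrand dominates [U (x0 + D + y0 * Y w)],
   whose expectation exceeds [EUr x0 y0]. *)
have [n lt_n] : exists n, EUr x0 y0 < EUr (x0 + D * n%:R) (y0 - D).
  apply: (Rintegral_gt_nondecreasing P
    (fun n w => U (x0 + D * n%:R + (y0 - D) * Y w))
    (fun w => U (x0 + D + y0 * Y w))).
  - by move=> n; exact: int_U.
  - exact: int_U.
  - by move=> w m n mn; apply: U_le; rewrite lerD2r lerD2l ler_pM2l // ler_nat.
  - move=> w; apply: U_le; have := DY_ge0 w.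
    by rewrite mulr0 addr0 mulrBl; lra.
  - move=> w; exists (Num.truncn (Y w)).+2; apply: U_le.
    have := truncnS_gt (Y w); rewrite -[(_.+2)%:R]natr1 mulrBl; nra.
  - by apply: EUr_ltDl.
by exists n%:R; split => //; exact: ltW.
Qed.

Lemma EUr_pB x0 y0 D : 0 <= D ->
  EUr (x0 + D * pB P U Y x0 y0 D) (y0 - D) = EUr x0 y0.
Proof.
rewrite le_eqVlt => /predU1P[<-|D_gt0]; first by rewrite !mul0r addr0 subr0.
rewrite pB_EUr.
apply: (continuous_inf_nonneg_superlevel (fun p => EUr (x0 + D * p) (y0 - D))).
- exact: EUr_affine_continuous.
- apply: EUr_le => w; have := mulr_ge0 (ltW D_gt0) (Y_ge0 w).
  by rewrite mulr0 addr0 mulrBl; lra.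
- exact: nonneg_superlevel_pB_neq0.
Qed.

End ExpectedUtility.

Theorem theorem16 (R : realType) (d : measure_display) (T : measurableType d)
  (P : probability T R) (U : R -> R) (Y : T -> R) (x0 y0 : R) :
  concave_fun U ->
  {homo U : a b / a < b} ->
  measurable_fun setT Y ->
  (forall w, 0 <= Y w) ->
  (forall x y : R, P.-integrable setT (fun w => (U (x + y * Y w))%:E)) ->
  forall xy : R * R, psi P U Y x0 y0 xy ->
    EU P U Y xy.1 xy.2 = EU P U Y x0 y0.
Proof.
move=> U_concave U_increasing _ Y_ge0 U_integrable xy.
rewrite !(EU_EUr _ _ _ U_integrable) => -[[D [D_ge0 ->]] | [D [D_ge0 ->]]] /=.
- by rewrite (EUr_pS _ _ _ U_concave U_increasing Y_ge0 U_integrable).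
- by rewrite (EUr_pB _ _ _ U_concave U_increasing Y_ge0 U_integrable).
Qed.
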